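(* Let $u,v,w,z,q,g,h,r\in\mathbb R$ and let $$F(y)=\begin{pmatrix}0&u&v\\ w&q&g+wy_2\\ z&h+uy_2&r+(v+z)y_2\end{pmatrix},\quad y\in\mathbb R^3,$$ and assume the symmetric part of $F$ is nondegenerate on the region considered. Then the torsion $H_{ijk}$ of $F$ vanishes identically, the Riemann tensor of the metric $G_{ij}$ vanishes identically, and every constant function $\Phi$ satisfies the one-loop vanishing $\beta$-function equations.
   Context: For a matrix-valued function $F_{ij}(y)$ on an open set of $\mathbb R^3$, set $G_{ij}=\tfrac12(F_{ij}+F_{ji})$ (metric, assumed nondegenerate, used to raise and lower indices), $B_{ij}=\tfrac12(F_{ij}-F_{ji})$, and $H_{ijk}=\partial_iB_{jk}+\partial_jB_{ki}+\partial_kB_{ij}$. Let $\nabla$ be the Levi-Civita connection of $G$, $R_{ij}$ its Ricci tensor and $R$ its scalar curvature. The one-loop vanishing $\beta$-function equations for a function $\Phi$ are: $0=R_{ij}-\nabla_i\nabla_j\Phi-\tfrac14H_{imn}H_j{}^{mn}$; $0=\nabla^k\Phi\,H_{kij}+\nabla^kH_{kij}$; $0=R-2\nabla_k\nabla^k\Phi-\nabla_k\Phi\nabla^k\Phi-\tfrac1{12}H_{kmn}H^{kmn}$. *)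

From HB Require Import structures.
From mathcomp Require Import all_boot all_order all_algebra.
From mathcomp Require Import all_classical all_reals all_analysis.
Import Order.TTheory GRing.Theory Num.Theory.
Import numFieldNormedType.Exports.
Local Open Scope ring_scope.

(* Points of R^3 are row vectors y : 'rV[R]_3; coordinates are indexed by
   'I_3 = {0,1,2}, so the paper's (1-indexed) y_1, y_2, y_3 are
   y 0 0, y 0 1, y 0 2. *)

Definition pd {R : realType} (i : 'I_3) (f : 'rV[R]_3 -> R) (y : 'rV[R]_3) : R :=
  derive f y (delta_mx 0 i).

Definition Gm {R : realType} (F : 'rV[R]_3 -> 'M[R]_3) (y : 'rV[R]_3) : 'M[R]_3 :=
  \matrix_(i, j) ((F y i j + F y j i) / 2).
Definition Bm {R : realType} (F : 'rV[R]_3 -> 'M[R]_3) (y : 'rV[R]_3) : 'M[R]_3 :=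
  \matrix_(i, j) ((F y i j - F y j i) / 2).
Definition Ginv {R : realType} (F : 'rV[R]_3 -> 'M[R]_3) (y : 'rV[R]_3) : 'M[R]_3 :=
  invmx (Gm F y).

Definition Htor {R : realType} (F : 'rV[R]_3 -> 'M[R]_3) (i j k : 'I_3)
  (y : 'rV[R]_3) : R :=
  pd i (fun x => Bm F x j k) y + pd j (fun x => Bm F x k i) y
  + pd k (fun x => Bm F x i j) y.

Definition Gam {R : realType} (F : 'rV[R]_3 -> 'M[R]_3) (l i j : 'I_3)
  (y : 'rV[R]_3) : R :=
  \sum_(m < 3) Ginv F y l m *
    (pd i (fun x => Gm F x m j) y + pd j (fun x => Gm F x m i) y
     - pd m (fun x => Gm F x i j) y) / 2.

Definition Riem {R : realType} (F : 'rV[R]_3 -> 'M[R]_3) (l i j k : 'I_3)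
  (y : 'rV[R]_3) : R :=
  pd i (Gam F l j k) y - pd j (Gam F l i k) y
  + \sum_(m < 3) (Gam F l i m y * Gam F m j k y - Gam F l j m y * Gam F m i k y).

Definition Ric {R : realType} (F : 'rV[R]_3 -> 'M[R]_3) (j k : 'I_3)
  (y : 'rV[R]_3) : R :=
  \sum_(i < 3) Riem F i i j k y.
Definition Scal {R : realType} (F : 'rV[R]_3 -> 'M[R]_3) (y : 'rV[R]_3) : R :=
  \sum_(j < 3) \sum_(k < 3) Ginv F y j k * Ric F j k y.

Definition hessPhi {R : realType} (F : 'rV[R]_3 -> 'M[R]_3) (Phi : 'rV[R]_3 -> R)
  (i j : 'I_3) (y : 'rV[R]_3) : R :=
  pd i (pd j Phi) y - \sum_(k < 3) Gam F k i j y * pd k Phi y.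

Definition gradUp {R : realType} (F : 'rV[R]_3 -> 'M[R]_3) (Phi : 'rV[R]_3 -> R)
  (k : 'I_3) (y : 'rV[R]_3) : R :=
  \sum_(a < 3) Ginv F y k a * pd a Phi y.

Definition covH {R : realType} (F : 'rV[R]_3 -> 'M[R]_3) (a k i j : 'I_3)
  (y : 'rV[R]_3) : R :=
  pd a (Htor F k i j) y
  - \sum_(b < 3) (Gam F b a k y * Htor F b i j y + Gam F b a i y * Htor F k b j y
                  + Gam F b a j y * Htor F k i b y).

Definition HH {R : realType} (F : 'rV[R]_3 -> 'M[R]_3) (i j : 'I_3)
  (y : 'rV[R]_3) : R :=
  \sum_(m < 3) \sum_(n < 3) \sum_(a < 3) \sum_(b < 3)
    Htor F i m n y * Ginv F y m a * Ginv F y n b * Htor F j a b y.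

Definition Hsq {R : realType} (F : 'rV[R]_3 -> 'M[R]_3) (y : 'rV[R]_3) : R :=
  \sum_(k < 3) \sum_(m < 3) \sum_(n < 3) \sum_(a < 3) \sum_(b < 3) \sum_(c < 3)
    Htor F k m n y * Ginv F y k a * Ginv F y m b * Ginv F y n c * Htor F a b c y.

Definition beta_eqs {R : realType} (F : 'rV[R]_3 -> 'M[R]_3) (Phi : 'rV[R]_3 -> R)
  (y : 'rV[R]_3) : Prop :=
  (forall i j : 'I_3,
      Ric F i j y - hessPhi F Phi i j y - HH F i j y / 4 = 0)
  /\ (forall i j : 'I_3,
      \sum_(k < 3) gradUp F Phi k y * Htor F k i j y
      + \sum_(k < 3) \sum_(a < 3) Ginv F y k a * covH F a k i j y = 0)
  /\ (Scal F y
      - 2 * (\sum_(k < 3) \sum_(a < 3) Ginv F y k a * hessPhi F Phi k a y)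
      - \sum_(k < 3) pd k Phi y * gradUp F Phi k y
      - Hsq F y / 12 = 0).

Definition Fex {R : realType} (u v w z q g h r : R) (y : 'rV[R]_3) : 'M[R]_3 :=
  let y2 := y 0 1 in
  \matrix_(i < 3, j < 3)
    nth 0 (nth [::] [:: [:: 0; u; v];
                       [:: w; q; g + w * y2];
                       [:: z; h + u * y2; r + (v + z) * y2]] i) j.

From HB Require Import structures.
From mathcomp Require Import all_boot all_order all_algebra.
From mathcomp Require Import all_classical all_reals all_analysis.
From mathcomp Require Import ring lra.
Import Order.TTheory GRing.Theory Num.Theory.
Import numFieldNormedType.Exports.
Local Open Scope ring_scope.
Local Open Scope classical_set_scope.

(* F(y) depends on y only through y_2, and affinely: F(y) = F(0) + y_2 S.  Hence
   the derivatives of G and B are constant and vanish except along y_2, and the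
   torsion is a cyclic sum of constants that cancels by the antisymmetry of B.
   The determinant of G(y) does not depend on y, so the adjugate gives G^{-1}
   explicitly; the Christoffel symbols that survive read only two columns of
   G^{-1}, which are affine in y_2, and the curvature vanishes by a polynomial
   identity in these entries.  With H = 0, Riem = 0 and a constant dilaton every
   term of the beta-function equations is zero. *)

Lemma det_mx22 (R : comNzRingType) (A : 'M[R]_2) :
  \det A = A 0 0 * A 1 1 - A 0 1 * A 1 0.
Proof.
have -> : A = \matrix_(i, j) A (inord i) (inord j).
  by apply/matrixP => i j; rewrite mxE !inord_val.
rewrite (expand_det_row _ 0) !big_ord_recr big_ord0 /= /cofactor !det_mx11 !mxE /=.
ring.
Qed.

Lemma det_mx33 (R : comNzRingType) (A : 'M[R]_3) :
  \det A = A 0 0 * (A 1 1 * A 2 2 - A 1 2 * A 2 1)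
         - A 0 1 * (A 1 0 * A 2 2 - A 1 2 * A 2 0)
         + A 0 2 * (A 1 0 * A 2 1 - A 1 1 * A 2 0).
Proof.
have -> : A = \matrix_(i, j) A (inord i) (inord j).
  by apply/matrixP => i j; rewrite mxE !inord_val.
rewrite (expand_det_row _ 0) !big_ord_recr big_ord0 /= /cofactor !det_mx22 !mxE /=.
ring.
Qed.

Lemma sum_ord3 (V : nmodType) (f : 'I_3 -> V) : \sum_(i < 3) f i = f 0 + f 1 + f 2.
Proof.
by rewrite !big_ord_recr big_ord0 /= add0r; congr (f _ + f _ + f _); apply: val_inj.
Qed.

Lemma mulmx1_invmx (R : comUnitRingType) n (A B : 'M[R]_n) :
  A *m B = 1%:M -> invmx A = B.
Proof.
move=> AB1; have [Aunit _] := mulmx1_unit AB1.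
by rewrite -[invmx A]mulmx1 -AB1 mulmxA mulVmx ?mul1mx.
Qed.

Lemma pd_affine {R : realType} (f : 'rV[R]_3 -> R) (a b : R) (i j : 'I_3) y :
  (forall x, f x = a + b * x 0 j) -> pd i f y = b * (i == j)%:R.
Proof.
move=> fE; rewrite /pd /derive; apply: cvg_lim => //.
apply: cvg_trans (cvg_cst (b * (i == j)%:R)).
apply: near_eq_cvg; near=> t.
have t_neq0 : t != 0 by near: t; exact: nbhs_dnbhs_neq.
by rewrite /= !fE !mxE eqxx /= eq_sym /GRing.scale /=; field.
Unshelve. all: try by end_near.
all: exact: dnbhs_filter.
Qed.

Lemma pd_cst {R : realType} (c : R) i y : pd i (fun=> c) y = 0.
Proof. by rewrite (@pd_affine _ _ c 0 i i) ?mul0r // => x; rewrite mul0r addr0. Qed.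

Lemma beta_eqs_cst_of_flat {R : realType} (F : 'rV[R]_3 -> 'M[R]_3) (c : R) y :
  (forall i j k x, Htor F i j k x = 0) ->
  (forall l i j k, Riem F l i j k y = 0) ->
  beta_eqs F (fun=> c) y.
Proof.
move=> H0 Riem0.
have Ric0 i j : Ric F i j y = 0 by apply: big1 => k _.
have hess0 i j : hessPhi F (fun=> c) i j y = 0.
  rewrite /hessPhi (eq_bigr (fun=> 0)) => [|k _]; last by rewrite pd_cst mulr0.
  by rewrite big1_eq (_ : pd j _ = fun=> 0) ?pd_cst ?subr0 //; apply/funext => x; rewrite pd_cst.
have covH0 a k i j : covH F a k i j y = 0.
  rewrite /covH (_ : Htor F k i j = fun=> 0) ?pd_cst; last by apply/funext => x.
  by rewrite big1 ?subr0 // => b _; rewrite !H0 !mulr0 !addr0.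
split; [|split].
- move=> i j; rewrite Ric0 hess0 /HH big1 ?mul0r ?subr0 // => m _.
  by do 3 (apply: big1 => ? _); rewrite H0 !mul0r.
- move=> i j; rewrite !big1 ?addr0 // => k _; first by apply: big1 => a _; rewrite covH0 mulr0.
  by rewrite H0 mulr0.
- rewrite /Scal /Hsq !big1 => [|k _|k _|k _|j _]; rewrite ?mul0r ?mulr0 ?subr0 //.
  + by do 5 (apply: big1 => ? _); rewrite H0 !mul0r.
  + by rewrite pd_cst mul0r.
  + by apply: big1 => a _; rewrite hess0 mulr0.
  + by apply: big1 => k _; rewrite Ric0 mulr0.
Qed.

Definition mx33 {R : nmodType} (rows : seq (seq R)) : 'M[R]_3 :=
  \matrix_(i, j) nth 0 (nth [::] rows i) j.

Ltac case_ord3 i := case: i => [[|[|[|?]]] ?] //=.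

Section ExplicitModel.

Variables (R : realType) (u v w z q g h r : R).

Local Notation F := (Fex u v w z q g h r).

Definition Fex_slope : 'M[R]_3 :=
  mx33 [:: [:: 0; 0; 0]; [:: 0; 0; w]; [:: 0; u; v + z]].

Lemma Fex_affine x : F x = F 0 + x 0 1 *: Fex_slope.
Proof. by apply/matrixP => i j; rewrite !mxE; case_ord3 i; case_ord3 j; ring. Qed.

Lemma Gm_affine x i j :
  Gm F x i j = Gm F 0 i j + (Fex_slope i j + Fex_slope j i) / 2 * x 0 1.
Proof. by rewrite /Gm (Fex_affine x) !mxE; field. Qed.

Lemma Bm_affine x i j :
  Bm F x i j = Bm F 0 i j + (Fex_slope i j - Fex_slope j i) / 2 * x 0 1.
Proof. by rewrite /Bm (Fex_affine x) !mxE; field. Qed.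

Lemma pd_Gm k i j y :
  pd k (fun x => Gm F x i j) y = (Fex_slope i j + Fex_slope j i) / 2 * (k == 1)%:R.
Proof. by apply: pd_affine => x; apply: Gm_affine. Qed.

Lemma pd_Bm k i j y :
  pd k (fun x => Bm F x i j) y = (Fex_slope i j - Fex_slope j i) / 2 * (k == 1)%:R.
Proof. by apply: pd_affine => x; apply: Bm_affine. Qed.

Lemma Htor_Fex i j k y : Htor F i j k y = 0.
Proof. by rewrite /Htor !pd_Bm !mxE; case_ord3 i; case_ord3 j; case_ord3 k; field. Qed.

(* G(y) = [[0, a, b/2], [a, q, e + a y_2], [b/2, e + a y_2, r + b y_2]]. *)
Let a := (u + w) / 2.
Let b := v + z.
Let e := (g + h) / 2.

Definition metric_det : R := - a ^+ 2 * r + a * b * e - q * b ^+ 2 / 4.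

Lemma det_Gm_Fex y : \det (Gm F y) = metric_det.
Proof. by rewrite det_mx33 !mxE /= /metric_det /a /b /e; field. Qed.

Definition metric_adj (t : R) : 'M[R]_3 :=
  let s := e + a * t in let f := r + b * t in
  mx33 [:: [:: q * f - s ^+ 2; s * b / 2 - a * f; a * s - q * b / 2];
           [:: s * b / 2 - a * f; - b ^+ 2 / 4; a * b / 2];
           [:: a * s - q * b / 2; a * b / 2; - a ^+ 2]].

Lemma Gm_mul_adj x : Gm F x *m metric_adj (x 0 1) = metric_det%:M.
Proof.
apply/matrixP => i j; rewrite !mxE sum_ord3 !mxE /metric_det /a /b /e.
by case_ord3 i; case_ord3 j; field.
Qed.

Lemma Ginv_Fex x : metric_det != 0 -> Ginv F x = metric_det^-1 *: metric_adj (x 0 1).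
Proof.
move=> D_neq0; apply: mulmx1_invmx.
by rewrite -scalemxAr Gm_mul_adj scale_scalar_mx mulVf.
Qed.

(* The Christoffel symbols of G, in terms of K = G^{-1}: as d_k G_{ij} = 0 unless
   k = 1, only Gamma^l_{11}, Gamma^l_{12} = Gamma^l_{21} and Gamma^l_{22} survive. *)
Definition christoffel (K : 'M[R]_3) (l i j : 'I_3) : R :=
  match val i, val j with
  | 1%N, 1%N => a * K l 2
  | 1%N, 2%N | 2%N, 1%N => b / 2 * K l 2
  | 2%N, 2%N => - (b / 2) * K l 1
  | _, _ => 0
  end.

Lemma Gam_Fex l i j x : Gam F l i j x = christoffel (Ginv F x) l i j.
Proof.
rewrite /Gam sum_ord3 !pd_Gm !mxE /christoffel /a /b.
by case_ord3 i; case_ord3 j; field.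
Qed.

Lemma christoffelZ c K l i j : christoffel (c *: K) l i j = c * christoffel K l i j.
Proof. by rewrite /christoffel !mxE; case_ord3 i; case_ord3 j; ring. Qed.

(* Columns 1 and 2 of metric_adj t, the only ones read by christoffel, are affine
   in t with this slope; column 0 (quadratic in t) is irrelevant and set to 0. *)
Definition adj_slope : 'M[R]_3 := mx33 [:: [:: 0; - (a * b / 2); a ^+ 2]; [::]; [::]].

Lemma christoffel_adj_affine t l i j :
  christoffel (metric_adj t) l i j
  = christoffel (metric_adj 0) l i j + christoffel adj_slope l i j * t.
Proof. by rewrite /christoffel !mxE; case_ord3 l; case_ord3 i; case_ord3 j; field. Qed.

Definition metric_christoffel t l i j := metric_det^-1 * christoffel (metric_adj t) l i j.
Definition metric_christoffel_slope l i j := metric_det^-1 * christoffel adj_slope l i j.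

Lemma Gam_Fex_explicit l i j x :
  metric_det != 0 -> Gam F l i j x = metric_christoffel (x 0 1) l i j.
Proof. by move=> D_neq0; rewrite Gam_Fex Ginv_Fex // christoffelZ. Qed.

Lemma pd_Gam_Fex k l i j y : metric_det != 0 ->
  pd k (Gam F l i j) y = metric_christoffel_slope l i j * (k == 1)%:R.
Proof.
move=> D_neq0; apply: pd_affine => x.
by rewrite Gam_Fex_explicit // /metric_christoffel christoffel_adj_affine mulrDr mulrA.
Qed.

Lemma metric_christoffel_flat t l i j k : metric_det != 0 ->
  metric_christoffel_slope l j k * (i == 1)%:R - metric_christoffel_slope l i k * (j == 1)%:R
  + \sum_(m < 3) (metric_christoffel t l i m * metric_christoffel t m j k
                  - metric_christoffel t l j m * metric_christoffel t m i k) = 0.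
Proof.
move=> D_neq0.
have D4_neq0 : - (u + w) ^+ 2 * r + (u + w) * (v + z) * (g + h) - q * (v + z) ^+ 2 != 0.
  have -> : - (u + w) ^+ 2 * r + (u + w) * (v + z) * (g + h) - q * (v + z) ^+ 2
            = 4 * metric_det by rewrite /metric_det /a /b /e; field.
  by rewrite mulf_neq0 // pnatr_eq0.
rewrite sum_ord3 /metric_christoffel_slope /metric_christoffel /christoffel !mxE.
rewrite /metric_det /a /b /e.
by case_ord3 l; case_ord3 i; case_ord3 j; case_ord3 k; field.
Qed.

Lemma Riem_Fex l i j k y : metric_det != 0 -> Riem F l i j k y = 0.
Proof.
move=> D_neq0; rewrite /Riem !pd_Gam_Fex //.
under eq_bigr => m _ do rewrite !Gam_Fex_explicit //.
exact: metric_christoffel_flat.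
Qed.

End ExplicitModel.

Theorem mainTheorem8 (R : realType) (u v w z q g h r : R) (U : set 'rV[R]_3) :
  open U ->
  (forall y, U y -> \det (Gm (Fex u v w z q g h r) y) != 0) ->
  forall y, U y ->
    (forall i j k : 'I_3, Htor (Fex u v w z q g h r) i j k y = 0)
    /\ (forall l i j k : 'I_3, Riem (Fex u v w z q g h r) l i j k y = 0)
    /\ (forall c : R, beta_eqs (Fex u v w z q g h r) (fun _ => c) y).
Proof.
move=> _ det_neq0 y Uy.
have D_neq0 := det_neq0 y Uy; rewrite det_Gm_Fex in D_neq0.
split; [|split] => [i j k|l i j k|c]; first exact: Htor_Fex.
- exact: Riem_Fex.
- by apply: beta_eqs_cst_of_flat => [i j k x|l i j k]; [exact: Htor_Fex | exact: Riem_Fex].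
Qed.
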